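(* Consider the semi-discrete scheme $$\frac{du_i}{dt}=\frac{1}{\Delta x}\big(F_{i-1/2}-F_{i+1/2}\big)+\bar u_{i-1/2},\qquad \bar u_{i+1/2}=\frac{u_i+u_{i+1}}2,$$ $$F_{i+1/2}=\begin{cases}u_i^2/2 & \text{if }\bar u_{i+1/2}>0,\\ 0&\text{if }\bar u_{i+1/2}=0,\\ u_{i+1}^2/2&\text{if }\bar u_{i+1/2}<0,\end{cases}$$ for the equation $u_t+(u^2/2)_x=u$, with $\Delta x>0$. Let $\{u_i\}$ be a sequence at which the right-hand side vanishes for every index $i$ involved (an equilibrium). Then: - (i) there is no index $i$ with $\bar u_{i-1/2}<0$ and $\bar u_{i+1/2}>0$; - (ii) there is no index $i$ with $\bar u_{i-3/2}<0$, $\bar u_{i-1/2}=0$ and $\bar u_{i+1/2}>0$.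
   Context: The unknowns $u_i$ are real numbers indexed by the cells of a uniform mesh with spacing $\Delta x$. An equilibrium of the scheme is a sequence $\{u_i\}$ with $F_{i-1/2}-F_{i+1/2}+\Delta x\,\bar u_{i-1/2}=0$ for all $i$. *)

From Stdlib Require Import Reals ZArith.
Open Scope R_scope.

(* ubar u i  =  \bar u_{i+1/2} = (u_i + u_{i+1})/2 *)
Definition ubar (u : Z -> R) (i : Z) : R := (u i + u (i + 1)%Z) / 2.

(* flux u i  =  F_{i+1/2} (upwind flux for Burgers, defined by the sign of ubar) *)
Definition flux (u : Z -> R) (i : Z) : R :=
  if Rlt_dec 0 (ubar u i) then (u i) ^ 2 / 2
  else if Rlt_dec (ubar u i) 0 then (u (i + 1)%Z) ^ 2 / 2
  else 0.

Definition equilibrium (dx : R) (u : Z -> R) : Prop :=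
  forall i : Z, flux u (i - 1)%Z - flux u i + dx * ubar u (i - 1)%Z = 0.

(* At an equilibrium the flux difference across cell i must balance dx times the
   left interface average.  If the left interface is negative and the right one
   positive, both fluxes are read from u_i and cancel, so that average would
   vanish.  In case (ii) the zero flux at i-1/2 forces u_i^2 = 0 from the
   equation at cell i, hence u_{i-1} = -u_i = 0; the equation at cell i-1 then
   again forces a vanishing negative average. *)
From Stdlib Require Import Reals ZArith Lra Lia.
Open Scope R_scope.

Lemma flux_ubar_pos (u : Z -> R) (i : Z) : 0 < ubar u i -> flux u i = u i ^ 2 / 2.
Proof.
  intros Hpos; unfold flux.
  destruct (Rlt_dec 0 (ubar u i)); [reflexivity | lra].
Qed.

Lemma flux_ubar_neg (u : Z -> R) (i : Z) :
  ubar u i < 0 -> flux u i = u (i + 1)%Z ^ 2 / 2.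
Proof.
  intros Hneg; unfold flux.
  destruct (Rlt_dec 0 (ubar u i)); [lra|].
  destruct (Rlt_dec (ubar u i) 0); [reflexivity | lra].
Qed.

Lemma flux_ubar_eq0 (u : Z -> R) (i : Z) : ubar u i = 0 -> flux u i = 0.
Proof.
  intros Hzero; unfold flux.
  destruct (Rlt_dec 0 (ubar u i)); [lra|].
  destruct (Rlt_dec (ubar u i) 0); [lra | reflexivity].
Qed.

Lemma equilibrium_no_expansion (dx : R) (u : Z -> R) (i : Z) :
  0 < dx -> equilibrium dx u -> ubar u (i - 1)%Z < 0 -> ~ 0 < ubar u i.
Proof.
  intros Hdx He Hleft Hright.
  pose proof (He i) as Ei.
  rewrite (flux_ubar_neg u (i - 1) Hleft), (flux_ubar_pos u i Hright) in Ei.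
  replace (i - 1 + 1)%Z with i in Ei by lia.
  assert (dx * ubar u (i - 1)%Z < 0) by (apply Rmult_pos_neg; lra).
  lra.
Qed.

Lemma equilibrium_no_expansion_through_zero (dx : R) (u : Z -> R) (i : Z) :
  0 < dx -> equilibrium dx u ->
  ubar u (i - 2)%Z < 0 -> ubar u (i - 1)%Z = 0 -> ~ 0 < ubar u i.
Proof.
  intros Hdx He Hleft Hmid Hright.
  pose proof (He (i - 1)%Z) as Eprev. pose proof (He i) as Ei.
  replace (i - 1 - 1)%Z with (i - 2)%Z in Eprev by lia.
  rewrite (flux_ubar_neg u (i - 2) Hleft), (flux_ubar_eq0 u (i - 1) Hmid) in Eprev.
  rewrite (flux_ubar_eq0 u (i - 1) Hmid), (flux_ubar_pos u i Hright), Hmid in Ei.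
  replace (i - 2 + 1)%Z with (i - 1)%Z in Eprev by lia.
  assert (Hui : u i = 0) by nra.
  assert (Hui1 : u (i - 1)%Z = 0).
  { unfold ubar in Hmid; replace (i - 1 + 1)%Z with i in Hmid by lia; lra. }
  rewrite Hui1 in Eprev.
  assert (dx * ubar u (i - 2)%Z < 0) by (apply Rmult_pos_neg; lra).
  lra.
Qed.

Theorem mainTheorem4 (dx : R) (u : Z -> R) :
  0 < dx -> equilibrium dx u ->
  (~ exists i : Z, ubar u (i - 1)%Z < 0 /\ ubar u i > 0) /\
  (~ exists i : Z, ubar u (i - 2)%Z < 0 /\ ubar u (i - 1)%Z = 0 /\ ubar u i > 0).
Proof.
  intros Hdx He. split.
  - intros [i [Hleft Hright]].
    exact (equilibrium_no_expansion dx u i Hdx He Hleft Hright).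
  - intros [i [Hleft [Hmid Hright]]].
    exact (equilibrium_no_expansion_through_zero dx u i Hdx He Hleft Hmid Hright).
Qed.
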